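(* Let $v_1,\dots,v_n\in\mathbb{R}^d$, let $x\in[0,1]^n$ with $\sum_{i=1}^n x(i)=q$ and $X=\sum_i x(i)v_iv_i^\top$ nonsingular. Let $S\subseteq[n]$ with $|S|=b$ be such that $Z=\sum_{i\in S}v_iv_i^\top$ is nonsingular, and let $Z'$ be a minimizer of $\operatorname{tr}((Z-v_iv_i^\top+v_jv_j^\top)^{-1})$ over all pairs $i\in S$, $j\in[n]\setminus S$ (singular matrices having value $+\infty$). For any $\varepsilon>0$, if \[ \operatorname{tr}(Z^{-1})\ge(1+\varepsilon)\operatorname{tr}(X^{-1})\quad\text{and}\quad b\ge q+2d+2(1+\varepsilon)\sqrt{\operatorname{tr}(X)\operatorname{tr}(X^{-1})}, \] then $\operatorname{tr}(Z'^{-1})\le\big(1-\frac{\varepsilon}{b}\big)\operatorname{tr}(Z^{-1})$. *)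

From mathcomp Require Import all_boot all_order all_algebra.
Set Implicit Arguments. Unset Strict Implicit. Unset Printing Implicit Defensive.
Import Order.TTheory GRing.Theory Num.Theory.
Local Open Scope ring_scope.

Definition outer (R : comRingType) (d : nat) (v : 'cV[R]_d) : 'M[R]_d :=
  v *m v^T.

Definition swapmx (R : comRingType) (d n : nat) (v : 'I_n -> 'cV[R]_d)
  (Z : 'M[R]_d) (i j : 'I_n) : 'M[R]_d :=
  Z - outer (v i) + outer (v j).

From mathcomp Require Import all_boot all_order all_algebra.
From mathcomp Require Import lra ring.
Import Order.TTheory GRing.Theory Num.Theory.
Local Open Scope ring_scope.

Set Implicit Arguments. Unset Strict Implicit. Unset Printing Implicit Defensive.

(* Write M = Z^-1, t_kl = v_k^T M v_l and h_kl = v_k^T M^2 v_l.  By the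
   Sherman-Morrison-Woodbury formula, replacing v_i by v_j lowers tr M by
   N_ij / D_ij, with D_ij = (1 - t_ii)(1 + t_jj) + t_ij^2 and
   N_ij = (1 - t_ii) h_jj + 2 t_ij h_ij - (1 + t_jj) h_ii, so it suffices to find
   i in S and j outside S with N_ij > (eps / b) tr(M) D_ij.  Average over such
   pairs with weights (1 - x_i) x_j, after bounding the cross term t_ij h_ij by
   AM-GM: the average then only involves sums over S and over its complement.
   These are controlled by sum_{i in S} t_ii = d, sum_{i in S} h_ii = tr M, and
   the Cauchy-Schwarz bounds tr(M)^2 <= tr(X^-1) sum_k x_k h_kk (which gives
   sum_k x_k h_kk >= (1 + eps) tr M) and (sum_k x_k t_kk)^2 <= tr(X) sum_k x_k h_kk;
   the lower bound on b makes the average positive. *)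

Section RealInequalities.
Variable R : rcfType.

Lemma quadratic_ge0_discr (a b c : R) : 0 <= a ->
  (forall t, 0 <= a * t ^+ 2 + 2 * b * t + c) -> b ^+ 2 <= a * c.
Proof.
move=> a_ge0 ge0; have [a0|a_neq0] := eqVneq a 0.
  have [b0|b_neq0] := eqVneq b 0; first by rewrite a0 b0 expr0n mul0r.
  have := ge0 (- (c + 1) / (2 * b)).
  have -> : a * (- (c + 1) / (2 * b)) ^+ 2 + 2 * b * (- (c + 1) / (2 * b)) + c = -1.
    by rewrite a0; field.
  lra.
have a_gt0 : 0 < a by rewrite lt_def a_neq0.
have := ge0 (- b / a).
have -> : a * (- b / a) ^+ 2 + 2 * b * (- b / a) + c = c - b ^+ 2 / a by field.
by rewrite subr_ge0 ler_pdivrMr // mulrC.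
Qed.

Lemma cauchy_schwarz (I : finType) (P : pred I) (w f g : I -> R) :
  (forall i, P i -> 0 <= w i) ->
  (\sum_(i | P i) w i * f i * g i) ^+ 2 <=
  (\sum_(i | P i) w i * f i ^+ 2) * (\sum_(i | P i) w i * g i ^+ 2).
Proof.
move=> w_ge0; apply: quadratic_ge0_discr => [|t].
  by apply: sumr_ge0 => i /w_ge0 wi; rewrite mulr_ge0 ?sqr_ge0.
have -> : (\sum_(i | P i) w i * f i ^+ 2) * t ^+ 2
    + 2 * (\sum_(i | P i) w i * f i * g i) * t + \sum_(i | P i) w i * g i ^+ 2
    = \sum_(i | P i) w i * (t * f i + g i) ^+ 2.
  rewrite mulr_suml mulr_sumr mulr_suml -!big_split /=.
  by apply: eq_bigr => i _; ring.
by apply: sumr_ge0 => i /w_ge0 wi; rewrite mulr_ge0 ?sqr_ge0.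
Qed.

Lemma sum_gt0_exists (I : finType) (P : pred I) (f : I -> R) :
  0 < \sum_(i | P i) f i -> exists2 i, P i & 0 < f i.
Proof.
move=> sum_gt0; case: (pickP (fun i => P i && (0 < f i))) => [i /andP[Pi fi_gt0]|no_pos].
  by exists i.
suff : \sum_(i | P i) f i <= 0 by rewrite leNgt sum_gt0.
by apply: sumr_le0 => i Pi; move: (no_pos i); rewrite /= Pi /= => /negbT; rewrite -leNgt.
Qed.

Definition swap_den (ti tj tij : R) := (1 - ti) * (1 + tj) + tij ^+ 2.

Definition swap_num (ti tj tij hi hj hij : R) :=
  (1 - ti) * hj + 2 * tij * hij - (1 + tj) * hi.

Lemma swap_gain_lower_bound (ti tj tij hi hj hij k : R) :
  0 <= ti -> 0 <= tj -> 0 <= hi -> 0 <= hj -> tij ^+ 2 <= ti * tj ->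
  hij ^+ 2 <= hi * hj -> 0 <= k ->
  (1 - 2 * ti) * hj - (1 + 2 * tj) * hi - k * (1 + tj - ti) <=
  swap_num ti tj tij hi hj hij - k * swap_den ti tj tij.
Proof.
move=> ti_ge0 tj_ge0 hi_ge0 hj_ge0 t_cs h_cs k_ge0.
(* AM-GM: [2 |tij hij| <= ti hj + tj hi] since [(tij hij)^2 <= (ti hj) (tj hi)] *)
have prod_cs : (tij * hij) ^+ 2 <= (ti * hj) * (tj * hi).
  rewrite exprMn [X in _ <= X](_ : _ = (ti * tj) * (hi * hj)); last by ring.
  by apply: ler_pM => //; apply: sqr_ge0.
have amgm : - (ti * hj + tj * hi) <= 2 * (tij * hij).
  have := sqr_ge0 (ti * hj - tj * hi).
  have := mulr_ge0 ti_ge0 hj_ge0; have := mulr_ge0 tj_ge0 hi_ge0; nra.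
have : 0 <= k * (ti * tj - tij ^+ 2) by rewrite mulr_ge0 // subr_ge0.
rewrite /swap_num /swap_den; nra.
Qed.

Lemma swap_ratio_ge (ti tj tij hi hj hij k : R) :
  ti <= 1 -> 0 <= tj -> 0 <= hi -> 0 <= k ->
  k * swap_den ti tj tij < swap_num ti tj tij hi hj hij ->
  0 < swap_den ti tj tij /\ k <= swap_num ti tj tij hi hj hij / swap_den ti tj tij.
Proof.
rewrite /swap_den /swap_num => ti_le1 tj_ge0 hi_ge0 k_ge0 gain.
have den_ge0 : 0 <= (1 - ti) * (1 + tj) + tij ^+ 2.
  by rewrite addr_ge0 ?sqr_ge0 // mulr_ge0 // ?subr_ge0 // addr_ge0.
suff den_gt0 : 0 < (1 - ti) * (1 + tj) + tij ^+ 2.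
  by split=> //; rewrite ler_pdivlMr // ltW.
rewrite lt_def den_ge0 andbT; apply/eqP => den0.
(* a vanishing denominator forces [ti = 1] and [tij = 0], so the numerator is [<= 0] *)
have ti1 : ti = 1 by nra.
have tij0 : tij = 0 by nra.
by move: gain; rewrite den0 ti1 tij0; nra.
Qed.

Lemma average_gain_pos_core (T A r p Q B eps z : R) :
  0 < eps -> 0 < T -> 0 < r -> (1 + eps) * T <= A -> T * p <= A * r ->
  0 <= p -> 0 <= Q -> Q + 2 * (1 + eps) * r <= B -> 0 <= z <= T ->
  0 < B * (A - T + z) - z * (Q + 2 * p) - eps * T * (Q + p).
Proof.
move=> eps_gt0 T_gt0 r_gt0 TA Tp p_ge0 Q_ge0 QB /andP[z_ge0 zT].
have epsT : eps * T <= A - T by move: TA; rewrite mulrDl mul1r; lra.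
have epsT_ge0 : 0 <= eps * T by rewrite mulr_ge0 ?ltW.
pose G z := B * (A - T + z) - z * (Q + 2 * p) - eps * T * (Q + p).
have G0 : 0 < G 0.
  rewrite /G addr0 mul0r subr0.
  have : (Q + 2 * (1 + eps) * r) * (A - T) <= B * (A - T) by rewrite ler_wpM2r //; lra.
  have : Q * (eps * T) <= Q * (A - T) by rewrite ler_wpM2l //; lra.
  have : eps * (T * p) <= eps * (A * r) by rewrite ler_wpM2l // ltW.
  have : 0 < r * (eps * (1 + eps) * T) by rewrite !mulr_gt0 //; lra.
  have : r * (eps * (1 + eps) * T) <= r * ((2 + eps) * A - 2 * (1 + eps) * T).
    rewrite ler_wpM2l ?(ltW r_gt0) //.
    have : 0 <= (2 + eps) * (A - (1 + eps) * T) by rewrite mulr_ge0 //; lra.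
    nra.
  nra.
have GT : 0 < G T.
  rewrite /G subrK.
  have : (Q + 2 * (1 + eps) * r) * A <= B * A by rewrite ler_wpM2r //; nra.
  have : Q * ((1 + eps) * T) <= Q * A by rewrite ler_wpM2l.
  have : (2 + eps) * (T * p) <= (2 + eps) * (A * r) by rewrite ler_wpM2l //; lra.
  have : 0 < eps * (A * r) by rewrite !mulr_gt0 //; nra.
  nra.
(* [G] is affine, so [G z] is a convex combination of [G 0] and [G T] *)
have convex : T * G z = (T - z) * G 0 + z * G T by rewrite /G; ring.
rewrite -/(G z) -(pmulr_rgt0 _ T_gt0) convex.
have [->|z_neq0] := eqVneq z 0; first by rewrite subr0 mul0r addr0 pmulr_rgt0.
have z_gt0 : 0 < z by rewrite lt_def z_neq0.
rewrite -[X in X < _]addr0; apply: ler_ltD (mulr_ge0 _ (ltW G0)) (mulr_gt0 z_gt0 GT).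
by rewrite subr_ge0.
Qed.

Lemma average_gain_pos (T A r p Q beta rho1 rho2 eps b d : R) :
  0 < eps -> 0 < T -> 0 < r -> 0 < b -> (1 + eps) * T <= A -> T * p <= A * r ->
  0 <= p -> 0 <= Q -> beta <= b -> Q + 2 * d + 2 * (1 + eps) * r <= beta ->
  0 <= rho1 <= d -> 0 <= rho2 <= T ->
  0 < (beta - 2 * rho1) * (A - T + rho2) - rho2 * (Q + 2 * p)
      - eps / b * T * (beta * Q + beta * p - rho1 * Q).
Proof.
move=> eps_gt0 T_gt0 r_gt0 b_gt0 TA Tp p_ge0 Q_ge0 beta_le beta_ge
  /andP[rho1_ge0 rho1_le] /andP[rho2_ge0 rho2_le].
have core : 0 < (beta - 2 * d) * (A - T + rho2) - rho2 * (Q + 2 * p)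
                 - eps * T * (Q + p).
  by apply: (average_gain_pos_core _ _ _ TA Tp) => //; [lra | rewrite rho2_ge0].
have : (beta - 2 * d) * (A - T + rho2) <= (beta - 2 * rho1) * (A - T + rho2).
  by rewrite ler_wpM2r //; nra.
have : eps / b * beta * (T * (Q + p)) <= eps * (T * (Q + p)).
  apply: ler_wpM2r; first exact: mulr_ge0 (ltW T_gt0) (addr_ge0 Q_ge0 p_ge0).
  by rewrite mulrAC ler_pdivrMr //; apply: ler_wpM2l => //; apply: ltW.
have : 0 <= eps / b * T * (rho1 * Q).
  by rewrite !mulr_ge0 ?invr_ge0 // ?(ltW eps_gt0) ?(ltW b_gt0) ?(ltW T_gt0).
nra.
Qed.

Lemma double_sum_gain (I : finType) (P Q : pred I) (u w t g : I -> R) (k : R) :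
  \sum_(i | P i) \sum_(j | Q j) u i * w j *
      ((1 - 2 * t i) * g j - (1 + 2 * t j) * g i - k * (1 + t j - t i)) =
  (\sum_(i | P i) u i - 2 * \sum_(i | P i) u i * t i) * (\sum_(j | Q j) w j * g j)
  - (\sum_(i | P i) u i * g i) * (\sum_(j | Q j) w j + 2 * \sum_(j | Q j) w j * t j)
  - k * ((\sum_(i | P i) u i) * (\sum_(j | Q j) w j)
         + (\sum_(i | P i) u i) * (\sum_(j | Q j) w j * t j)
         - (\sum_(i | P i) u i * t i) * (\sum_(j | Q j) w j)).
Proof.
set wg := \sum_(j | Q j) w j * g j; set W := \sum_(j | Q j) w j.
set wt := \sum_(j | Q j) w j * t j.
have inner i : \sum_(j | Q j) u i * w j *
      ((1 - 2 * t i) * g j - (1 + 2 * t j) * g i - k * (1 + t j - t i)) =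
    u i * ((1 - 2 * t i) * wg - g i * (W + 2 * wt) - k * (W + wt - t i * W)).
  rewrite (eq_bigr (fun j => u i * (1 - 2 * t i) * (w j * g j)
      - u i * (g i + k - k * t i) * w j - u i * (2 * g i + k) * (w j * t j))) => [|j _].
    by rewrite !sumrB -!mulr_sumr -/wg -/W -/wt; ring.
  by ring.
rewrite (eq_bigr _ (fun i _ => inner i)).
rewrite (eq_bigr (fun i => u i * (wg - k * (W + wt)) + u i * t i * (k * W - 2 * wg)
    - u i * g i * (W + 2 * wt))) => [|i _]; last by ring.
by rewrite sumrB big_split /= -!mulr_suml -/wg -/W -/wt; ring.
Qed.

End RealInequalities.

Section DotProduct.
Variables (R : rcfType) (d : nat).
Implicit Types (u w : 'cV[R]_d).

Definition dotv u w : R := (u^T *m w) 0 0.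

Lemma dotvE u w : dotv u w = \sum_c u c 0 * w c 0.
Proof. by rewrite /dotv mxE; apply: eq_bigr => c _; rewrite mxE. Qed.

Lemma dotvC u w : dotv u w = dotv w u.
Proof. by rewrite !dotvE; apply: eq_bigr => c _; rewrite mulrC. Qed.

Lemma dotvZr u w a : dotv u (a *: w) = a * dotv u w.
Proof. by rewrite /dotv -scalemxAr mxE. Qed.

Lemma dotv_sumr u (I : finType) (P : pred I) (F : I -> 'cV[R]_d) :
  dotv u (\sum_(i | P i) F i) = \sum_(i | P i) dotv u (F i).
Proof. by rewrite /dotv mulmx_sumr summxE. Qed.

Lemma dotv_mulmxr u w (A : 'M[R]_d) : dotv u (A *m w) = dotv (A^T *m u) w.
Proof. by rewrite /dotv trmx_mul trmxK mulmxA. Qed.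

Lemma dotv_ge0 u : 0 <= dotv u u.
Proof. by rewrite dotvE sumr_ge0 // => c _; rewrite -expr2 sqr_ge0. Qed.

Lemma dotv_cauchy_schwarz (I : finType) (P : pred I) (w : I -> R)
    (a b : I -> 'cV[R]_d) :
  (forall i, P i -> 0 <= w i) ->
  (\sum_(i | P i) w i * dotv (a i) (b i)) ^+ 2 <=
  (\sum_(i | P i) w i * dotv (a i) (a i)) * (\sum_(i | P i) w i * dotv (b i) (b i)).
Proof.
move=> w_ge0.
have flat (f g : I -> 'cV[R]_d) : \sum_(i | P i) w i * dotv (f i) (g i) =
    \sum_(p : I * 'I_d | P p.1) w p.1 * f p.1 p.2 0 * g p.1 p.2 0.
  rewrite (eq_bigr (fun i => \sum_c w i * f i c 0 * g i c 0)) => [|i _].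
    by rewrite pair_big; apply: eq_bigl => p; rewrite andbT.
  by rewrite dotvE mulr_sumr; apply: eq_bigr => c _; rewrite mulrA.
rewrite !flat; under [in X in _ <= X * _]eq_bigr do rewrite -mulrA -expr2.
under [in X in _ <= _ * X]eq_bigr do rewrite -mulrA -expr2.
by apply: cauchy_schwarz => p /w_ge0.
Qed.

Lemma dotv_sqr_le u w : dotv u w ^+ 2 <= dotv u u * dotv w w.
Proof.
have := @dotv_cauchy_schwarz 'I_1 xpredT (fun _ => 1) (fun _ => u) (fun _ => w).
by rewrite !big_ord1 !mul1r; apply.
Qed.

End DotProduct.

Section OuterProducts.
Variables (R : rcfType) (d : nat).
Implicit Types (a b c : 'cV[R]_d) (B C : 'M[R]_d).

Lemma mulmx_outer_vec a b c : a *m b^T *m c = dotv b c *: a.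
Proof. by rewrite -mulmxA [b^T *m c]mx11_scalar mul_mx_scalar. Qed.

Lemma mxtrace_outer a b : \tr (a *m b^T) = dotv b a.
Proof. by rewrite mxtrace_mulC /mxtrace big_ord1. Qed.

Lemma trmx_sum_outer (I : finType) (P : pred I) (w : I -> R) (u : I -> 'cV[R]_d) :
  (\sum_(i | P i) w i *: outer (u i))^T = \sum_(i | P i) w i *: outer (u i).
Proof.
rewrite linear_sum; apply: eq_bigr => i _.
by rewrite linearZ /= /outer trmx_mul trmxK.
Qed.

Lemma mxtrace_sandwich_outer (I : finType) (P : pred I) (w : I -> R)
    (u : I -> 'cV[R]_d) B C :
  \tr (B *m (\sum_(i | P i) w i *: outer (u i)) *m C) =
  \sum_(i | P i) w i * dotv (C^T *m u i) (B *m u i).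
Proof.
rewrite mulmx_sumr mulmx_suml linear_sum /=; apply: eq_bigr => i _.
rewrite -scalemxAr -scalemxAl mxtraceZ /outer !mulmxA -(mulmxA (B *m u i)).
by rewrite -[_^T *m C]trmxK trmx_mul trmxK mxtrace_outer.
Qed.

Section RankTwoUpdate.
Variables (Z : 'M[R]_d) (a b : 'cV[R]_d).
Hypotheses (Z_unit : Z \in unitmx) (Z_sym : Z^T = Z).
Let M := invmx Z.
Let ma := M *m a.
Let mb := M *m b.
Let ta := dotv a ma.
Let tb := dotv b mb.
Let tab := dotv a mb.

Lemma swap_unitmx_mxtrace_inv : swap_den ta tb tab != 0 ->
  (Z - outer a + outer b) \in unitmx /\
  \tr (invmx (Z - outer a + outer b)) =
    \tr M - swap_num ta tb tab (dotv ma ma) (dotv mb mb) (dotv ma mb) / swap_den ta tb tab.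
Proof.
set D := swap_den ta tb tab => D_neq0.
set Z' := Z - outer a + outer b.
have M_sym : M^T = M by rewrite /M trmx_inv Z_sym.
have ZM : Z *m M = 1%:M by apply: mulmxV.
have outerM u : outer u *m M = u *m (M *m u)^T by rewrite /outer trmx_mul M_sym mulmxA.
have Z'M : Z' *m M = 1%:M - a *m ma^T + b *m mb^T.
  by rewrite /Z' mulmxDl mulmxBl ZM !outerM.
have Z'ma : Z' *m ma = tab *: b + (1 - ta) *: a.
  rewrite /Z' mulmxDl mulmxBl mulmxA ZM mul1mx /outer !mulmx_outer_vec.
  rewrite -/ta (_ : dotv b ma = tab); last by rewrite /ma dotv_mulmxr M_sym dotvC.
  by rewrite scalerBl scale1r addrC.
have Z'mb : Z' *m mb = (1 + tb) *: b - tab *: a.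
  rewrite /Z' mulmxDl mulmxBl mulmxA ZM mul1mx /outer !mulmx_outer_vec -/tb -/tab.
  by rewrite scalerDl scale1r addrAC addrC.
(* Woodbury's formula for the inverse of the rank-two update *)
pose W := M - D^-1 *: ((1 - ta) *: (mb *m mb^T) + tab *: (mb *m ma^T + ma *m mb^T)
                       - (1 + tb) *: (ma *m ma^T)).
have Z'W : Z' *m W = 1%:M.
  rewrite mulmxBr Z'M -scalemxAr mulmxBr mulmxDr -!scalemxAr mulmxDr.
  rewrite !(mulmxA Z' mb) !(mulmxA Z' ma) Z'ma Z'mb !mulmxBl !mulmxDl -!scalemxAl.
  set E1 := b *m mb^T; set E2 := a *m mb^T; set E3 := b *m ma^T; set E4 := a *m ma^T.
  have -> : (1 - ta) *: ((1 + tb) *: E1 - tab *: E2)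
      + tab *: ((1 + tb) *: E3 - tab *: E4 + (tab *: E1 + (1 - ta) *: E2))
      - (1 + tb) *: (tab *: E3 + (1 - ta) *: E4) = D *: (E1 - E4).
    by apply/matrixP => i j; rewrite !mxE /D /swap_den; ring.
  by rewrite scalerA mulVf // scale1r -addrA subKr subrK.
have [Z'_unit _] := mulmx1_unit Z'W.
have -> : invmx Z' = W by rewrite -[W](mulKmx Z'_unit) Z'W mulmx1.
split => //; rewrite /W raddfB /= mxtraceZ !raddfB !raddfD /= !mxtraceZ !mxtrace_outer.
by rewrite /swap_num [dotv mb ma]dotvC; congr (_ - _); rewrite mulrC; congr (_ * _); ring.
Qed.

End RankTwoUpdate.
End OuterProducts.

Section ExchangeStep.
Variables (R : rcfType) (d n : nat) (v : 'I_n -> 'cV[R]_d) (S : {set 'I_n}).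
Let Z := \sum_(i in S) outer (v i).
Hypothesis Z_unit : Z \in unitmx.
Let M := invmx Z.
Let tau k l := dotv (v k) (M *m v l).
Let h k l := dotv (M *m v k) (M *m v l).

Let Z_weighted : Z = \sum_(i in S) 1 *: outer (v i).
Proof. by apply: eq_bigr => i _; rewrite scale1r. Qed.

Let Z_sym : Z^T = Z.
Proof. by rewrite Z_weighted trmx_sum_outer. Qed.

Let M_sym : M^T = M.
Proof. by rewrite /M trmx_inv Z_sym. Qed.

Lemma tau_sum k l : tau k l = \sum_(s in S) tau s k * tau s l.
Proof.
have -> : tau k l = dotv (M *m v l) (Z *m (M *m v k)).
  by rewrite mulmxA mulmxV // mul1mx dotvC.
rewrite mulmx_suml dotv_sumr; apply: eq_bigr => s _.
by rewrite /outer mulmx_outer_vec dotvZr [dotv (M *m v l) _]dotvC.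
Qed.

Lemma tau_ge0 k : 0 <= tau k k.
Proof. by rewrite tau_sum sumr_ge0 // => s _; rewrite -expr2 sqr_ge0. Qed.

Lemma tau_sqr_le k l : tau k l ^+ 2 <= tau k k * tau l l.
Proof.
have := @cauchy_schwarz _ _ (mem S) (fun=> 1) (tau ^~ k) (tau ^~ l) (fun _ _ => ler01).
rewrite [tau k l]tau_sum [tau k k]tau_sum [tau l l]tau_sum.
by under eq_bigr do rewrite mul1r; under [X in _ * X]eq_bigr do rewrite mul1r expr2;
  under [X in X * _]eq_bigr do rewrite mul1r expr2.
Qed.

Lemma tau_le1 i : i \in S -> tau i i <= 1.
Proof.
move=> iS; have : tau i i ^+ 2 <= tau i i.
  rewrite [X in _ <= X]tau_sum (bigD1 i) //= -expr2 lerDl.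
  by apply: sumr_ge0 => s _; rewrite -expr2 sqr_ge0.
by have := tau_ge0 i; nra.
Qed.

Lemma mxtrace_invmx_sum : \tr M = \sum_(s in S) h s s.
Proof.
have -> : \tr M = \tr (M *m Z *m M) by rewrite mulVmx // mul1mx.
rewrite Z_weighted mxtrace_sandwich_outer.
by apply: eq_bigr => s _; rewrite mul1r M_sym.
Qed.

Lemma dim_sum_tau : d%:R = \sum_(s in S) tau s s.
Proof.
have -> : d%:R = \tr (1%:M *m Z *m M) :> R by rewrite mul1mx mulmxV // mxtrace1.
rewrite Z_weighted mxtrace_sandwich_outer.
by apply: eq_bigr => s _; rewrite mul1r M_sym mul1mx dotvC.
Qed.

Variable x : 'I_n -> R.
Hypothesis x01 : forall i, 0 <= x i <= 1.
Let X := \sum_i x i *: outer (v i).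
Hypothesis X_unit : X \in unitmx.
Let N := invmx X.

Let x_ge0 i : 0 <= x i. Proof. by case/andP: (x01 i). Qed.
Let x_le1 i : x i <= 1. Proof. by case/andP: (x01 i). Qed.

Let mxtrace_X_sandwich (B C : 'M[R]_d) : C^T = C ->
  \tr (B *m X *m C) = \sum_k x k * dotv (C *m v k) (B *m v k).
Proof. by move=> C_sym; rewrite mxtrace_sandwich_outer C_sym. Qed.

Let N_sym : N^T = N.
Proof. by rewrite /N trmx_inv trmx_sum_outer. Qed.

Let mxtrace_N : \tr N = \sum_k x k * dotv (N *m v k) (N *m v k).
Proof. by rewrite -mxtrace_X_sandwich // mulVmx // mul1mx. Qed.

Let mxtrace_X : \tr X = \sum_k x k * dotv (v k) (v k).
Proof.
rewrite -[X in \tr X]mul1mx -[X in \tr X]mulmx1 mxtrace_X_sandwich ?trmx1 //.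
by apply: eq_bigr => k _; rewrite !mul1mx.
Qed.

Lemma mxtrace_invmx_sqr_le : \tr M ^+ 2 <= \tr N * \sum_k x k * h k k.
Proof.
have -> : \tr M = \sum_k x k * dotv (N *m v k) (M *m v k).
  by rewrite -mxtrace_X_sandwich // -mulmxA mulmxV // mulmx1.
by rewrite mxtrace_N; apply: dotv_cauchy_schwarz => k _; apply: x_ge0.
Qed.

Lemma sum_tau_sqr_le : (\sum_k x k * tau k k) ^+ 2 <= \tr X * \sum_k x k * h k k.
Proof. by rewrite mxtrace_X; apply: dotv_cauchy_schwarz => k _; apply: x_ge0. Qed.

Lemma dim_sqr_le : d%:R ^+ 2 <= \tr N * \tr X.
Proof.
have -> : d%:R = \tr (1%:M *m X *m N) :> R by rewrite mul1mx mulmxV // mxtrace1.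
rewrite mxtrace_X_sandwich //; under eq_bigr do rewrite mul1mx.
by rewrite mxtrace_N mxtrace_X; apply: dotv_cauchy_schwarz => k _; apply: x_ge0.
Qed.

Variable eps : R.
Hypotheses (d_gt0 : (0 < d)%N) (eps_gt0 : 0 < eps).
Hypothesis mxtrace_gap : (1 + eps) * \tr N <= \tr M.
Hypothesis card_large :
  \sum_i x i + 2 * d%:R + 2 * (1 + eps) * Num.sqrt (\tr X * \tr N) <= #|S|%:R.

Let A := \sum_k x k * h k k.
Let r := Num.sqrt (\tr X * \tr N).
Let c := eps / #|S|%:R.

Let mxtrace_NX_gt0 : 0 < \tr N /\ 0 < \tr X.
Proof.
have N_ge0 : 0 <= \tr N by rewrite mxtrace_N sumr_ge0 // => k _; rewrite mulr_ge0 ?dotv_ge0.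
have X_ge0 : 0 <= \tr X by rewrite mxtrace_X sumr_ge0 // => k _; rewrite mulr_ge0 ?dotv_ge0.
have d_ge1 : 1 <= d%:R :> R by rewrite ler1n.
by have := dim_sqr_le; split; nra.
Qed.

Let mxtrace_M_gt0 : 0 < \tr M.
Proof.
case: mxtrace_NX_gt0 => N_gt0 _.
by apply: lt_le_trans mxtrace_gap; rewrite mulr_gt0 // addr_gt0.
Qed.

Lemma mxtrace_invmx_growth : (1 + eps) * \tr M <= A.
Proof.
case: mxtrace_NX_gt0 => N_gt0 _.
have A_ge0 : 0 <= A by rewrite sumr_ge0 // => k _; rewrite mulr_ge0 ?dotv_ge0.
rewrite -(ler_pM2r mxtrace_M_gt0).
have : (1 + eps) * \tr M ^+ 2 <= (1 + eps) * (\tr N * A).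
  by rewrite ler_wpM2l ?mxtrace_invmx_sqr_le // addr_ge0 // ltW.
have : (1 + eps) * \tr N * A <= \tr M * A by rewrite ler_wpM2r.
lra.
Qed.

Lemma mxtrace_sum_tau_out_le : \tr M * (\sum_(j | j \notin S) x j * tau j j) <= A * r.
Proof.
case: mxtrace_NX_gt0 => N_gt0 X_gt0.
set p := \sum_(j | j \notin S) x j * tau j j.
have p_ge0 : 0 <= p by rewrite sumr_ge0 // => j _; rewrite mulr_ge0 ?tau_ge0.
have p_le : p <= \sum_k x k * tau k k.
  by rewrite [X in _ <= X](bigID (mem S)) /= lerDr sumr_ge0 // => k _; rewrite mulr_ge0 ?tau_ge0.
have A_ge0 : 0 <= A by rewrite sumr_ge0 // => k _; rewrite mulr_ge0 ?dotv_ge0.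
have r_sqr : r ^+ 2 = \tr X * \tr N by rewrite sqr_sqrtr // mulr_ge0 ?ltW.
have lhs_ge0 : 0 <= \tr M * p by rewrite mulr_ge0 // ltW.
have rhs_ge0 : 0 <= A * r by rewrite mulr_ge0 // sqrtr_ge0.
rewrite -(ler_pXn2r (_ : (0 < 2)%N)) ?nnegrE // !exprMn r_sqr.
rewrite [X in _ <= X](_ : _ = (\tr N * A) * (\tr X * A)); last by ring.
apply: ler_pM (sqr_ge0 _) (sqr_ge0 _) mxtrace_invmx_sqr_le _.
apply: le_trans sum_tau_sqr_le.
by rewrite ler_pXn2r ?nnegrE // (le_trans p_ge0 p_le).
Qed.

Lemma weighted_swap_gain_pos :
  0 < \sum_(i in S) \sum_(j | j \notin S) (1 - x i) * x j *
        ((1 - 2 * tau i i) * h j j - (1 + 2 * tau j j) * h i i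
         - c * \tr M * (1 + tau j j - tau i i)).
Proof.
case: mxtrace_NX_gt0 => N_gt0 X_gt0.
have r_gt0 : 0 < r by rewrite sqrtr_gt0 mulr_gt0.
have sum_x : \sum_i x i = \sum_(i in S) x i + \sum_(j | j \notin S) x j.
  exact: bigID.
have out_h : \sum_(j | j \notin S) x j * h j j
    = A - \tr M + \sum_(i in S) (1 - x i) * h i i.
  have -> : \sum_(i in S) (1 - x i) * h i i = \sum_(i in S) h i i - \sum_(i in S) x i * h i i.
    by rewrite -sumrB; apply: eq_bigr => i _; ring.
  by rewrite /A [in RHS](bigID (mem S)) /= mxtrace_invmx_sum; ring.
have card_S : \sum_(i in S) (1 - x i) = #|S|%:R - \sum_(i in S) x i.
  by rewrite sumrB sumr_const.
rewrite double_sum_gain out_h card_S.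
apply: (average_gain_pos (d := d%:R) _ _ _ _ mxtrace_invmx_growth mxtrace_sum_tau_out_le) => //.
- have : 0 <= 2 * (1 + eps) * r by rewrite !mulr_ge0 ?sqrtr_ge0 ?addr_ge0 ?ltW.
  have : 1 <= d%:R :> R by rewrite ler1n.
  have : 0 <= \sum_i x i by apply: sumr_ge0.
  move: card_large; rewrite -/r; lra.
- by apply: sumr_ge0 => j _; rewrite mulr_ge0 ?tau_ge0.
- exact: sumr_ge0.
- by rewrite lerBlDr lerDl sumr_ge0.
- by move: card_large; rewrite -/r sum_x; lra.
- rewrite dim_sum_tau sumr_ge0 ?ler_sum // => i _.
    by apply: ler_piMl; rewrite ?tau_ge0 // lerBlDr lerDl.
  by rewrite mulr_ge0 ?subr_ge0 ?x_le1 ?tau_ge0.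
- rewrite mxtrace_invmx_sum sumr_ge0 ?ler_sum // => i _.
    by apply: ler_piMl; rewrite ?dotv_ge0 // lerBlDr lerDl.
  by rewrite mulr_ge0 ?subr_ge0 ?x_le1 ?dotv_ge0.
Qed.

Let weight_ge0 i j : 0 <= (1 - x i) * x j.
Proof. by rewrite mulr_ge0 ?subr_ge0 ?x_le1 ?x_ge0. Qed.

Let cM_ge0 : 0 <= c * \tr M.
Proof. by rewrite !mulr_ge0 ?invr_ge0 // ltW. Qed.

Lemma exists_good_swap : exists2 i, i \in S & exists2 j, j \notin S &
  c * \tr M * swap_den (tau i i) (tau j j) (tau i j)
    < swap_num (tau i i) (tau j j) (tau i j) (h i i) (h j j) (h i j).
Proof.
have gain_le : forall i j, i \in S -> j \notin S ->
    (1 - x i) * x j * ((1 - 2 * tau i i) * h j j - (1 + 2 * tau j j) * h i i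
                       - c * \tr M * (1 + tau j j - tau i i))
    <= (1 - x i) * x j * (swap_num (tau i i) (tau j j) (tau i j) (h i i) (h j j) (h i j)
                          - c * \tr M * swap_den (tau i i) (tau j j) (tau i j)).
  move=> i j _ _; apply: ler_wpM2l; first exact: weight_ge0.
  by apply: swap_gain_lower_bound; rewrite ?tau_ge0 ?dotv_ge0 ?tau_sqr_le ?dotv_sqr_le.
have := lt_le_trans weighted_swap_gain_pos
  (ler_sum _ (fun i iS => ler_sum _ (fun j jS => gain_le i j iS jS))).
case/sum_gt0_exists => i iS /sum_gt0_exists [j jS].
move=> gain_pos; exists i => //; exists j => //; rewrite -subr_gt0; move: gain_pos.
have [->|w_neq0] := eqVneq ((1 - x i) * x j) 0; first by rewrite mul0r ltxx.
by rewrite pmulr_rgt0 // lt_def w_neq0 weight_ge0.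
Qed.

Lemma exchange_step : exists2 i, i \in S & exists2 j, j \notin S &
  swapmx v Z i j \in unitmx /\ \tr (invmx (swapmx v Z i j)) <= (1 - c) * \tr M.
Proof.
have [i iS [j jS gain]] := exists_good_swap.
have [den_gt0 ratio_ge] := swap_ratio_ge (tau_le1 iS) (tau_ge0 j) (dotv_ge0 _) cM_ge0 gain.
have [swap_unit mxtrace_swap] :=
  swap_unitmx_mxtrace_inv (a := v i) (b := v j) Z_unit Z_sym (lt0r_neq0 den_gt0).
exists i => //; exists j => //; split => //.
by rewrite /swapmx mxtrace_swap [(1 - c) * _]mulrBl mul1r lerD2l lerN2.
Qed.

End ExchangeStep.

Unset Implicit Arguments.
Set Strict Implicit.

Theorem proposition3p8 (R : rcfType) (d n : nat) (v : 'I_n -> 'cV[R]_d)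
  (x : 'I_n -> R) (q : R) (S : {set 'I_n}) (b : nat) (Z' : 'M[R]_d) (eps : R) :
  (forall i, 0 <= x i <= 1) ->
  \sum_i x i = q ->
  (\sum_i x i *: outer (v i)) \in unitmx ->
  #|S| = b ->
  (\sum_(i in S) outer (v i)) \in unitmx ->
  (* Z' is a minimizer of tr((Z - v_i v_i^T + v_j v_j^T)^-1) over i in S,
     j notin S, singular matrices having value +oo *)
  (exists2 i0, i0 \in S & exists2 j0, j0 \notin S &
     Z' = swapmx v (\sum_(i in S) outer (v i)) i0 j0) ->
  (forall i j, i \in S -> j \notin S ->
     swapmx v (\sum_(k in S) outer (v k)) i j \in unitmx ->
     Z' \in unitmx /\
     \tr (invmx Z') <= \tr (invmx (swapmx v (\sum_(k in S) outer (v k)) i j))) ->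
  0 < eps ->
  \tr (invmx (\sum_(i in S) outer (v i)))
    >= (1 + eps) * \tr (invmx (\sum_i x i *: outer (v i))) ->
  b%:R >= q + 2 * d%:R + 2 * (1 + eps) *
     Num.sqrt (\tr (\sum_i x i *: outer (v i)) *
               \tr (invmx (\sum_i x i *: outer (v i)))) ->
  Z' \in unitmx /\
  \tr (invmx Z') <= (1 - eps / b%:R) * \tr (invmx (\sum_(i in S) outer (v i))).
Proof.
(* only the minimality of Z' is needed, not that it is itself a swap *)
move=> x01 <- X_unit <- Z_unit _ Z'_min eps_gt0 mxtrace_gap card_large.
have [d0|d_gt0] := posnP d.
  subst d; split; first by rewrite unitmxE det_mx00 unitr1.
  by rewrite /mxtrace !big_ord0 mulr0.
have [i iS [j jS [swap_unit swap_le]]] :=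
  exchange_step Z_unit x01 X_unit d_gt0 eps_gt0 mxtrace_gap card_large.
have [Z'_unit Z'_le] := Z'_min i j iS jS swap_unit.
by split=> //; apply: le_trans Z'_le _.
Qed.
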